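(* The median rule $\mathrm{MED}$ and the reversal scoring rule $R_{rev}$ are agenda separable: for $R\in\{\mathrm{MED},R_{rev}\}$, every agenda $\mathcal{A}$, every independent partition $\{\mathcal{A}_1,\mathcal{A}_2\}$ of $\mathcal{A}$ and every profile $P\in\mathcal{J}_{\mathcal{A}}^n$, $R(P)=\{J^1\cup J^2 \mid J^1\in R(P\downarrow\mathcal{A}_1),\ J^2\in R(P\downarrow\mathcal{A}_2)\}$.
   Context: Fix a propositional language, a consistent formula $\Gamma$ (the integrity constraint) and a number $n\ge1$ of agents. An issue is a pair $\{\varphi,\neg\varphi\}$ with $\varphi$ neither a tautology nor a contradiction. An agenda $\mathcal{A}$ is a finite set of issues; a sub-agenda is a union of some issues of $\mathcal{A}$. A judgment set over $\mathcal{A}$ is a subset $J\subseteq\mathcal{A}$; it is complete if it contains $\varphi$ or $\neg\varphi$ for each issue, and consistent if $J\cup\{\Gamma\}$ is satisfiable. $\mathcal{J}_{\mathcal{A}}$ denotes the set of complete consistent judgment sets over $\mathcal{A}$ (likewise for sub-agendas, with the same $\Gamma$). A profile is $P=\langle J_1,\dots,J_n\rangle\in\mathcal{J}_{\mathcal{A}}^n$; its restriction to a sub-agenda $\mathcal{A}'$ is $P\downarrow\mathcal{A}'=\langle J_1\cap\mathcal{A}',\dots,J_n\cap\mathcal{A}'\rangle$. $N(P,\varphi)=|\{i:\varphi\in J_i\}|$ and $d_H(J,J')=|J\setminus J'|$. A partition $\{\mathcal{A}_1,\mathcal{A}_2\}$ of $\mathcal{A}$ into sub-agendas is independent if for all $J^1\in\mathcal{J}_{\mathcal{A}_1}$,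 $J^2\in\mathcal{J}_{\mathcal{A}_2}$, $J^1\cup J^2$ is consistent. The median rule is $\mathrm{MED}(P)=\arg\max_{J\in\mathcal{J}_{\mathcal{A}}}\sum_{\varphi\in J}N(P,\varphi)$. The reversal scoring rule is $R_{rev}(P)=\arg\max_{J\in\mathcal{J}_{\mathcal{A}}}\sum_{i=1}^n\sum_{\varphi\in J}s_{rev}(J_i,\varphi)$, where $s_{rev}(J_i,\varphi)$ is the minimal number of judgment reversals needed in $J_i$ to reject $\varphi$, i.e. $\min\{d_H(J_i,J')\mid J'\in\mathcal{J}_{\mathcal{A}},\ \varphi\notin J'\}$. *)

From Stdlib Require Import Classical ClassicalEpsilon.
From HB Require Import structures.
From mathcomp Require Import all_boot.
Set Implicit Arguments. Unset Strict Implicit. Unset Printing Implicit Defensive.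

Inductive form : Type :=
  | Var of nat
  | Neg of form
  | And of form & form
  | Or of form & form
  | Imp of form & form.

Lemma form_eq_dec : forall x y : form, {x = y} + {x <> y}.
Proof. decide equality; exact: (decP eqP). Defined.

HB.instance Definition _ := comparableMixin form_eq_dec.

Fixpoint eval (v : nat -> bool) (f : form) : bool :=
  match f with
  | Var k => v k
  | Neg g => ~~ eval v g
  | And g h => eval v g && eval v h
  | Or g h => eval v g || eval v h
  | Imp g h => eval v g ==> eval v h
  end.

Definition nontrivial (phi : form) : Prop :=
  (exists v, eval v phi) /\ (exists v, ~~ eval v phi).

Definition consistent_form (Gamma : form) : Prop := exists v, eval v Gamma.

Definition consistent (Gamma : form) (S : seq form) : Prop :=
  exists v, eval v Gamma /\ all (eval v) S.

(** An agenda is given by the list I of generators phi of its issues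
    {phi, ~phi}; its set of formulas is agf I. *)
Definition agf (I : seq form) : seq form :=
  flatten [seq [:: phi; Neg phi] | phi <- I].

(** J is a complete and consistent judgment set over the agenda I
    (a judgment set is a finite set of formulas, represented by a seq). *)
Definition inJ (Gamma : form) (I : seq form) (J : seq form) : Prop :=
  [/\ {subset J <= agf I},
      (forall phi, phi \in I -> (phi \in J) \/ (Neg phi \in J))
    & consistent Gamma J].

Definition agenda_partition (I I1 I2 : seq form) : Prop :=
  [/\ {subset I1 <= I}, {subset I2 <= I}, {subset I <= I1 ++ I2},
      (forall phi, phi \in I1 -> phi \notin I2)
    & (I1 != [::]) && (I2 != [::])].

Definition independent (Gamma : form) (I1 I2 : seq form) : Prop :=
  forall J1 J2, inJ Gamma I1 J1 -> inJ Gamma I2 J2 -> consistent Gamma (J1 ++ J2).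

(** profiles: P : 'I_n -> seq form *)
Definition restrict n (I' : seq form) (P : 'I_n -> seq form) : 'I_n -> seq form :=
  fun i => [seq x <- P i | x \in agf I'].

Definition Ncount n (P : 'I_n -> seq form) (phi : form) : nat :=
  \sum_(i < n) (phi \in P i).

Definition dH (J J' : seq form) : nat :=
  size (undup [seq x <- J | x \notin J']).

(** minimum of a set of naturals (0 by convention if empty) *)
Definition natmin (Q : nat -> Prop) : nat :=
  match excluded_middle_informative
          (exists m, Q m /\ forall k, Q k -> m <= k) with
  | left H => proj1_sig (constructive_indefinite_description _ H)
  | right _ => 0
  end.

Definition s_rev (Gamma : form) (I : seq form) (Ji : seq form) (phi : form) : nat :=
  natmin (fun d => exists J', [/\ inJ Gamma I J', phi \notin J' & dH Ji J' = d]).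

Definition score_med n (P : 'I_n -> seq form) (J : seq form) : nat :=
  \sum_(phi <- undup J) Ncount P phi.

Definition score_rev (Gamma : form) (I : seq form) n (P : 'I_n -> seq form)
  (J : seq form) : nat :=
  \sum_(i < n) \sum_(phi <- undup J) s_rev Gamma I (P i) phi.

Definition argmax_in (Gamma : form) (I : seq form) (score : seq form -> nat)
  (J : seq form) : Prop :=
  inJ Gamma I J /\ forall J', inJ Gamma I J' -> score J' <= score J.

Definition MED (Gamma : form) (I : seq form) n (P : 'I_n -> seq form) (J : seq form) : Prop :=
  argmax_in Gamma I (score_med P) J.

Definition Rrev (Gamma : form) (I : seq form) n (P : 'I_n -> seq form) (J : seq form) : Prop :=
  argmax_in Gamma I (score_rev Gamma I P) J.

From HB Require Import structures.
From mathcomp Require Import all_boot.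
From Stdlib Require Import Classical ClassicalEpsilon Lia.
From mathcomp Require Import zify.
Set Implicit Arguments. Unset Strict Implicit. Unset Printing Implicit Defensive.

(* Independence makes restriction a bijection between J_A and J_A1 x J_A2.
   A formula lying in both sub-agendas (an issue phi of A1 with Neg phi an
   issue of A2, or conversely) has the same status in every judgment set of
   every sub-agenda, so it contributes a constant to any score.  Both scores
   are sums of formula-wise weights, and the weights restrict correctly: the
   count N(P, phi) trivially, and s_rev because a cheapest reversal of
   phi in A1 never needs to touch the A2-part of J_i.  Hence, on J_A,
   score(J) + c = score_1(J|A1) + score_2(J|A2), and maximising the left side
   amounts to maximising both summands independently. *)

Definition restrictJ (A J : seq form) : seq form := [seq x <- J | x \in agf A].

Definition setsum (g : form -> nat) (s : seq form) : nat := \sum_(x <- undup s) g x.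

Lemma eq_restrictJ A J J' : J =i J' -> restrictJ A J =i restrictJ A J'.
Proof. by move=> eJ x; rewrite !mem_filter eJ. Qed.

Lemma mem_agf x I : x \in agf I <-> exists2 a, a \in I & x = a \/ x = Neg a.
Proof.
split=> [/flatten_mapP[a aI]|[a aI xa]].
  by rewrite !inE => /orP[]/eqP->; exists a; tauto.
by apply/flatten_mapP; exists a => //; case: xa => ->; rewrite !inE eqxx ?orbT.
Qed.

Lemma agf_subset I I' : {subset I <= I'} -> {subset agf I <= agf I'}.
Proof. by move=> sII' x /mem_agf[a aI xa]; apply/mem_agf; exists a; first exact: sII'. Qed.

Lemma agf_cat I1 I2 : agf (I1 ++ I2) = agf I1 ++ agf I2.
Proof. by rewrite /agf map_cat flatten_cat. Qed.

Lemma consistent_not_mem_Neg Gamma S a : consistent Gamma S -> a \in S -> Neg a \notin S.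
Proof. by move=> [v [_ /allP evS]] /evS aS; apply/negP => /evS /=; rewrite aS. Qed.

Lemma eq_inJ Gamma I J J' : J =i J' -> inJ Gamma I J -> inJ Gamma I J'.
Proof.
move=> eJ [sJ cJ [v [gv /allP evJ]]]; split.
- by move=> x; rewrite -eJ; apply: sJ.
- by move=> phi /cJ; rewrite !eJ.
- by exists v; split=> //; apply/allP => x; rewrite -eJ; apply: evJ.
Qed.

Lemma agenda_partition_sym I I1 I2 : agenda_partition I I1 I2 -> agenda_partition I I2 I1.
Proof.
case=> s1 s2 s12 dis ne; split=> //; last by rewrite andbC.
  by move=> x /s12; rewrite !mem_cat orbC.
by move=> phi phiI2; apply/negP => /dis; rewrite phiI2.
Qed.

Lemma independent_sym Gamma I1 I2 : independent Gamma I1 I2 -> independent Gamma I2 I1.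
Proof.
move=> ind J2 J1 h2 h1; have [v [gv evJ]] := ind _ _ h1 h2.
by exists v; rewrite all_cat andbC -all_cat.
Qed.

Section Restriction.

Variables (Gamma : form) (I I1 I2 : seq form).
Hypotheses (part : agenda_partition I I1 I2) (ind : independent Gamma I1 I2).

Lemma inJ_restrictJ I' J : {subset I' <= I} -> inJ Gamma I J -> inJ Gamma I' (restrictJ I' J).
Proof.
move=> sI' [sJ cJ [v [gv /allP evJ]]]; split.
- by move=> x; rewrite mem_filter => /andP[].
- move=> phi phiI'; have /cJ := sI' _ phiI'; rewrite !mem_filter.
  have /mem_agf-> : exists2 a, a \in I' & phi = a \/ phi = Neg a by exists phi; tauto.
  have /mem_agf-> // : exists2 a, a \in I' & Neg phi = a \/ Neg phi = Neg a by exists phi; tauto.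
- by exists v; split=> //; apply/allP => x; rewrite mem_filter => /andP[_ /evJ].
Qed.

Lemma inJ_cat J1 J2 : inJ Gamma I1 J1 -> inJ Gamma I2 J2 -> inJ Gamma I (J1 ++ J2).
Proof.
have [s1 s2 s12 _ _] := part.
move=> h1 h2; have cJ := ind h1 h2; case: h1 h2 => [a1 c1 _] [a2 c2 _]; split=> //.
- by move=> x; rewrite mem_cat => /orP[/a1/(agf_subset s1)|/a2/(agf_subset s2)].
- by move=> phi /s12; rewrite mem_cat => /orP[/c1|/c2] [] h; [left|right|left|right];
    rewrite mem_cat h ?orbT.
Qed.

Lemma inJ_mem_agf J x : inJ Gamma I J -> x \in J -> (x \in agf I1) || (x \in agf I2).
Proof.
have [_ _ s12 _ _] := part.
by case=> sJ _ _ /sJ /(agf_subset s12); rewrite agf_cat mem_cat.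
Qed.

Lemma restrictJ_cat J : inJ Gamma I J -> J =i restrictJ I1 J ++ restrictJ I2 J.
Proof.
move=> hJ x; rewrite mem_cat !mem_filter.
by case xJ: (x \in J); rewrite ?andbT ?andbF // (inJ_mem_agf hJ xJ).
Qed.

End Restriction.

(* A disagreement on Neg a would, by completeness, put both a and Neg a, or both
   Neg a and Neg (Neg a), into Ja ++ Jb. *)
Lemma mem_Neg_independent Gamma Ia Ib Ja Jb a :
  independent Gamma Ia Ib -> a \in Ia -> Neg a \in Ib ->
  inJ Gamma Ia Ja -> inJ Gamma Ib Jb -> (Neg a \in Ja) = (Neg a \in Jb).
Proof.
move=> ind aIa naIb ha hb; have cJ := ind _ _ ha hb.
case: ha hb => [_ ca _] [_ cb _].
apply/idP/idP => h.
  case: (cb _ naIb) => // nnaJb.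
  by have := consistent_not_mem_Neg cJ (a := Neg a); rewrite !mem_cat h nnaJb orbT => /(_ isT).
case: (ca _ aIa) => // aJa.
by have := consistent_not_mem_Neg cJ (a := a); rewrite !mem_cat h aJa orbT => /(_ isT).
Qed.

Section Overlap.

Variables (Gamma : form) (I I1 I2 : seq form).
Hypotheses (part : agenda_partition I I1 I2) (ind : independent Gamma I1 I2).

Lemma mem_agf_overlap J1 J2 x :
  x \in agf I1 -> x \in agf I2 -> inJ Gamma I1 J1 -> inJ Gamma I2 J2 ->
  (x \in J1) = (x \in J2).
Proof.
have [_ _ _ dis _] := part.
move=> /mem_agf[a aI1 xa] /mem_agf[b bI2 xb] h1 h2.
case: xa xb => -> [eab|eab].
- by subst b; move: (dis _ aI1); rewrite bI2.
- by subst a; rewrite (mem_Neg_independent (independent_sym ind) bI2 aI1 h2 h1).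
- by subst b; rewrite (mem_Neg_independent ind aI1 bI2 h1 h2).
- by case: eab => eab; subst b; move: (dis _ aI1); rewrite bI2.
Qed.

Lemma restrictJ_catl J1 J2 : inJ Gamma I1 J1 -> inJ Gamma I2 J2 ->
  restrictJ I1 (J1 ++ J2) =i J1.
Proof.
move=> h1 h2 x; rewrite mem_filter mem_cat.
case x1: (x \in J1); first by case: h1 => sJ1 _ _; rewrite (sJ1 _ x1).
case x2: (x \in J2); rewrite ?andbF ?andbT //=; apply/negbTE/negP => xa.
have xb : x \in agf I2 by case: h2 => sJ2 _ _; apply: sJ2.
by rewrite (mem_agf_overlap xa xb h1 h2) x2 in x1.
Qed.

Lemma restrictJ_overlap J J' : inJ Gamma I J -> inJ Gamma I J' ->
  [seq x <- restrictJ I2 J | x \in agf I1] =i [seq x <- restrictJ I2 J' | x \in agf I1].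
Proof.
have [s1 s2 _ _ _] := part.
move=> hJ hJ' x; rewrite !mem_filter.
case xa: (x \in agf I1); case xb: (x \in agf I2); rewrite ?andbF //=.
have := mem_agf_overlap xa xb (inJ_restrictJ s1 hJ) (inJ_restrictJ s2 hJ').
by rewrite !mem_filter xa xb.
Qed.

End Overlap.

Lemma restrictJ_catr Gamma I I1 I2 J1 J2 :
  agenda_partition I I1 I2 -> independent Gamma I1 I2 ->
  inJ Gamma I1 J1 -> inJ Gamma I2 J2 -> restrictJ I2 (J1 ++ J2) =i J2.
Proof.
move=> part ind h1 h2 x; rewrite -(restrictJ_catl (agenda_partition_sym part)
  (independent_sym ind) h2 h1 x).
by rewrite !mem_filter !mem_cat orbC.
Qed.

Lemma argmax_in_separable Gamma I I1 I2 (score S1 S2 : seq form -> nat) :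
  agenda_partition I I1 I2 -> independent Gamma I1 I2 ->
  (exists c, forall J, inJ Gamma I J ->
     score J + c = S1 (restrictJ I1 J) + S2 (restrictJ I2 J)) ->
  (forall s t, s =i t -> S1 s = S1 t) -> (forall s t, s =i t -> S2 s = S2 t) ->
  forall J, argmax_in Gamma I score J <->
    exists J1 J2, [/\ argmax_in Gamma I1 S1 J1, argmax_in Gamma I2 S2 J2 & J =i J1 ++ J2].
Proof.
move=> part ind [c hsc] eqS1 eqS2 J; have [s1 s2 _ _ _] := part.
have S1_cat J1 J2 : inJ Gamma I1 J1 -> inJ Gamma I2 J2 ->
    S1 (restrictJ I1 (J1 ++ J2)) = S1 J1.
  by move=> h1 h2; apply/eqS1/(restrictJ_catl part ind h1 h2).
have S2_cat J1 J2 : inJ Gamma I1 J1 -> inJ Gamma I2 J2 ->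
    S2 (restrictJ I2 (J1 ++ J2)) = S2 J2.
  by move=> h1 h2; apply/eqS2/(restrictJ_catr part ind h1 h2).
split=> [[hJ maxJ]|[J1 [J2 [[h1 max1] [h2 max2] eJ]]]].
  have h1 := inJ_restrictJ s1 hJ; have h2 := inJ_restrictJ s2 hJ.
  exists (restrictJ I1 J), (restrictJ I2 J); split; last exact: (restrictJ_cat part hJ).
  - split=> // J1' h1'; have hJ' := inJ_cat part ind h1' h2.
    have := maxJ _ hJ'; have := hsc _ hJ'; have := hsc _ hJ.
    rewrite S1_cat // S2_cat //; lia.
  - split=> // J2' h2'; have hJ' := inJ_cat part ind h1 h2'.
    have := maxJ _ hJ'; have := hsc _ hJ'; have := hsc _ hJ.
    rewrite S1_cat // S2_cat //; lia.
have hJ : inJ Gamma I J by apply: eq_inJ (inJ_cat part ind h1 h2) => x; rewrite eJ.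
split=> // J' hJ'.
have E1 : S1 (restrictJ I1 J) = S1 J1.
  by rewrite -(S1_cat _ _ h1 h2); apply/eqS1/eq_restrictJ.
have E2 : S2 (restrictJ I2 J) = S2 J2.
  by rewrite -(S2_cat _ _ h1 h2); apply/eqS2/eq_restrictJ.
have := max1 _ (inJ_restrictJ s1 hJ'); have := max2 _ (inJ_restrictJ s2 hJ').
have := hsc _ hJ'; have := hsc _ hJ; rewrite E1 E2; lia.
Qed.

Lemma eq_setsum g g' s t : s =i t -> {in s, g =1 g'} -> setsum g s = setsum g' t.
Proof.
move=> est egg'; rewrite /setsum (perm_big (undup t)); last first.
  by apply: uniq_perm; rewrite ?undup_uniq // => x; rewrite !mem_undup est.
by apply: eq_big_seq => x; rewrite mem_undup -est => /egg'.
Qed.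

Lemma setsum_filterC g s (A : seq form) :
  setsum g s = setsum g [seq x <- s | x \in A] + setsum g [seq x <- s | x \notin A].
Proof. by rewrite /setsum (bigID (mem A)) /= -!filter_undup !big_filter. Qed.

Lemma setsum_decomposition Gamma I I1 I2 (g g1 g2 : form -> nat) :
  agenda_partition I I1 I2 -> independent Gamma I1 I2 ->
  {in agf I1, g1 =1 g} -> {in agf I2, g2 =1 g} ->
  exists c, forall J, inJ Gamma I J ->
    setsum g J + c = setsum g1 (restrictJ I1 J) + setsum g2 (restrictJ I2 J).
Proof.
move=> part ind eg1 eg2.
have [[J0 hJ0]|noJ] := classic (exists J0, inJ Gamma I J0); last first.
  by exists 0 => J hJ; case: noJ; exists J.
exists (setsum g2 [seq x <- restrictJ I2 J0 | x \in agf I1]) => J hJ.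
rewrite (eq_setsum (restrictJ_overlap part ind hJ0 hJ) (in1W (frefl _))).
rewrite (setsum_filterC g J (agf I1)) (setsum_filterC g2 (restrictJ I2 J) (agf I1)).
have -> : setsum g1 (restrictJ I1 J) = setsum g [seq x <- J | x \in agf I1].
  by apply: eq_setsum => // x; rewrite mem_filter => /andP[/eg1].
have -> : setsum g2 [seq x <- restrictJ I2 J | x \notin agf I1] =
          setsum g [seq x <- J | x \notin agf I1].
  apply: eq_setsum => [x|x]; rewrite !mem_filter; last by case/and3P=> _ /eg2.
  case xJ: (x \in J); rewrite ?andbF ?andbT //=.
  by case xa: (x \in agf I1) => //=; move: (inJ_mem_agf part hJ xJ); rewrite xa.
lia.
Qed.

Lemma exists_least (Q : nat -> Prop) k : Q k -> exists m, Q m /\ forall j, Q j -> m <= j.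
Proof.
move=> Qk; pose q j := if excluded_middle_informative (Q j) then true else false.
have qP j : reflect (Q j) (q j) by rewrite /q; case: excluded_middle_informative; constructor.
have [m /qP Qm minm] := find_ex_minn (ex_intro q k (introT (qP k) Qk)).
by exists m; split=> // j /qP /minm.
Qed.

Lemma natminP (Q : nat -> Prop) k : Q k -> Q (natmin Q) /\ forall j, Q j -> natmin Q <= j.
Proof.
move=> Qk; rewrite /natmin; case: excluded_middle_informative => [H|noQ].
  by case: (constructive_indefinite_description _ H) => m [].
by case: noQ; exact: exists_least Qk.
Qed.

Lemma natmin0 (Q : nat -> Prop) : (forall k, ~ Q k) -> natmin Q = 0.
Proof.
move=> noQ; rewrite /natmin; case: excluded_middle_informative => // H.
by exfalso; case: H => m [/noQ].
Qed.

Lemma eq_natmin (Q Q' : nat -> Prop) :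
  (forall d, Q d -> exists2 d', Q' d' & d' <= d) ->
  (forall d, Q' d -> exists2 d', Q d' & d' <= d) -> natmin Q = natmin Q'.
Proof.
move=> QQ' Q'Q.
have [[k Qk]|noQ] := classic (exists k, Q k); last first.
  rewrite !natmin0 // => k Qk; apply: noQ; last by exists k.
  by have [d Qd _] := Q'Q _ Qk; exists d.
have [Qm minQ] := natminP Qk; have [k' Q'k' _] := QQ' _ Qk.
have [Q'm minQ'] := natminP Q'k'.
have [a Qa le_a] := Q'Q _ Q'm; have [b Q'b le_b] := QQ' _ Qm.
by move: (minQ _ Qa) (minQ' _ Q'b); lia.
Qed.

Lemma leq_dH J J' K K' :
  {subset [seq x <- J | x \notin J'] <= [seq x <- K | x \notin K']} -> dH J J' <= dH K K'.
Proof.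
move=> sub; apply: uniq_leq_size; first exact: undup_uniq.
by move=> x; rewrite !mem_undup => /sub.
Qed.

(* Going down, restrict the reversed judgment set to A1; going up, complete a
   reversed judgment set on A1 by the A2-part of J_i, which costs nothing. *)
Lemma s_rev_restrictJ Gamma I I1 I2 Ji phi :
  agenda_partition I I1 I2 -> independent Gamma I1 I2 ->
  inJ Gamma I Ji -> phi \in agf I1 ->
  s_rev Gamma I Ji phi = s_rev Gamma I1 (restrictJ I1 Ji) phi.
Proof.
move=> part ind hJi phiA1; have [s1 s2 _ _ _] := part.
apply: eq_natmin => d.
  move=> [J' [hJ' phiJ' <-]]; exists (dH (restrictJ I1 Ji) (restrictJ I1 J')).
    exists (restrictJ I1 J'); split=> //; first exact: inJ_restrictJ s1 hJ'.
    by rewrite mem_filter (negbTE phiJ') andbF.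
  apply: leq_dH => x; rewrite !mem_filter => /andP[nx /andP[xA1 xJi]].
  by rewrite xJi andbT; move: nx; rewrite xA1.
move=> [J1' [h1' phiJ1' <-]]; have h2 := inJ_restrictJ s2 hJi.
exists (dH Ji (J1' ++ restrictJ I2 Ji)).
  exists (J1' ++ restrictJ I2 Ji); split=> //; first exact: (inJ_cat part ind h1' h2).
  rewrite mem_cat (negbTE phiJ1') /=; apply/negP => phiJ2.
  have phiA2 : phi \in agf I2 by case: h2 => sJ2 _ _; apply: sJ2.
  by rewrite (mem_agf_overlap part ind phiA1 phiA2 h1' h2) phiJ2 in phiJ1'.
apply: leq_dH => x; rewrite !mem_filter mem_cat negb_or => /andP[/andP[nx1 nx2] xJi].
rewrite xJi nx1 /= andbT; move: nx2; rewrite mem_filter xJi andbT => nxA2.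
by move: (inJ_mem_agf part hJi xJi); rewrite (negbTE nxA2) orbF.
Qed.

Lemma Ncount_restrict n (P : 'I_n -> seq form) A : {in agf A, Ncount (restrict A P) =1 Ncount P}.
Proof. by move=> x xA; apply: eq_bigr => i _; rewrite /restrict mem_filter xA. Qed.

Definition rev_weight Gamma I n (P : 'I_n -> seq form) (phi : form) : nat :=
  \sum_(i < n) s_rev Gamma I (P i) phi.

Lemma rev_weight_restrict Gamma I I1 I2 n (P : 'I_n -> seq form) :
  agenda_partition I I1 I2 -> independent Gamma I1 I2 -> (forall i, inJ Gamma I (P i)) ->
  {in agf I1, rev_weight Gamma I1 (restrict I1 P) =1 rev_weight Gamma I P}.
Proof.
move=> part ind hP x xA1; apply: eq_bigr => i _.
by rewrite (s_rev_restrictJ part ind (hP i) xA1).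
Qed.

Lemma score_rev_setsum Gamma I n (P : 'I_n -> seq form) J :
  score_rev Gamma I P J = setsum (rev_weight Gamma I P) J.
Proof. by rewrite /score_rev /setsum exchange_big. Qed.

Theorem corollary1 (Gamma : form) (n : nat) (I I1 I2 : seq form)
    (P : 'I_n -> seq form) :
  consistent_form Gamma ->
  0 < n ->
  (forall phi, phi \in I -> nontrivial phi) ->
  agenda_partition I I1 I2 ->
  independent Gamma I1 I2 ->
  (forall i, inJ Gamma I (P i)) ->
  (forall J, MED Gamma I P J <->
     exists J1 J2, [/\ MED Gamma I1 (restrict I1 P) J1,
                       MED Gamma I2 (restrict I2 P) J2 & J =i J1 ++ J2]) /\
  (forall J, Rrev Gamma I P J <->
     exists J1 J2, [/\ Rrev Gamma I1 (restrict I1 P) J1,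
                       Rrev Gamma I2 (restrict I2 P) J2 & J =i J1 ++ J2]).
Proof.
move=> _ _ _ part ind hP.
split; apply: (argmax_in_separable part ind).
- have [c hc] := setsum_decomposition part ind
    (@Ncount_restrict n P I1) (@Ncount_restrict n P I2).
  by exists c.
- by move=> s t /eq_setsum; apply.
- by move=> s t /eq_setsum; apply.
- have [c hc] := setsum_decomposition part ind (rev_weight_restrict part ind hP)
    (rev_weight_restrict (agenda_partition_sym part) (independent_sym ind) hP).
  by exists c => J hJ; rewrite !score_rev_setsum; apply: hc.
- by move=> s t e; rewrite !score_rev_setsum; apply: eq_setsum.
- by move=> s t e; rewrite !score_rev_setsum; apply: eq_setsum.
Qed.
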